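(* Suppose $w\ge 4$ and $E\subset Z(W)$ with $|E|>\frac12|Z(W)|$. Then for every integer $n\equiv 8\pmod{24}$ there exist $b_1,\dots,b_8\in E$ with $n\equiv b_1+\cdots+b_8\pmod W$.
   Context: $W=8\prod_{2<p<w}p$ (product over primes $p$), $[W]^*=\{a\in\{1,\dots,W\}:\gcd(a,W)=1\}$, and $Z(W)=\{b\in[W]^*: b\equiv h^2\pmod W\text{ for some integer }h\}$ is the set of reduced quadratic residues modulo $W$. *)

From mathcomp Require Import all_boot all_order all_algebra.
Set Implicit Arguments. Unset Strict Implicit. Unset Printing Implicit Defensive.

Definition Wmod (w : nat) : nat := 8 * \prod_(3 <= p < w | prime p) p.

(* Since W > 1, the residue W (= 0) is not coprime to W, so {1..W} coprime to W
   corresponds exactly to the nonzero residues in 'I_W coprime to W. *)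
Definition Zres (W : nat) : {set 'I_W} :=
  [set a : 'I_W | coprime a W && [exists h : 'I_W, (h ^ 2) %% W == a]].

From mathcomp Require Import all_boot all_order all_algebra.
From mathcomp Require Import zify.
Set Implicit Arguments. Unset Strict Implicit. Unset Printing Implicit Defensive.
Import GRing.Theory.

(* Induct over the odd primes dividing W, starting from W = 24, where
   Z(24) = {1}.  Passing from M to M p, the Chinese remainder theorem
   identifies Z(M p) with Q_p x Z(M), Q_p the (p-1)/2 nonzero squares mod p.
   For A, B in Z(M p) with |A| + |B| > |Z(M p)|, the fibre sizes a(x), b(y)
   over F_p satisfy sum a + sum b > |Q_p| |Z(M)|, so some level set gives
   X, Y in F_p with |X| + |Y| > |Q_p| and every fibre pair over X x Y still
   dense in Z(M).  By Cauchy-Davenport four such pairs (X, Y) add up to all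
   of F_p: choose the F_p-coordinates summing to n, then the Z(M)-coordinates
   in the corresponding fibres by induction. *)

Section Sumsets.
Variable G : finZmodType.
Local Open Scope ring_scope.

Definition sumset (A B : {set G}) : {set G} := [set a + b | a in A, b in B].

Lemma leq_card_sumset (A B : {set G}) b : b \in B -> (#|A| <= #|sumset A B|)%N.
Proof.
move=> bB; rewrite -(card_imset _ (addIr b)).
apply/subset_leq_card/subsetP => _ /imsetP[a aA ->].
by apply/imset2P; exists a b.
Qed.

Fixpoint sumsets (A : nat -> {set G}) (k : nat) : {set G} :=
  if k is k.+1 then sumset (sumsets A k) (A k) else [set 0].

Lemma sumsets_neq0 (A : nat -> {set G}) k :
  (forall i, (i < k)%N -> A i != set0) -> sumsets A k != set0.
Proof.
elim: k => [|k IH] A0 /=; first by apply/set0Pn; exists 0; rewrite inE.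
have /set0Pn[s sS] := IH (fun i ik => A0 i (ltnW ik)).
have /set0Pn[a aA] := A0 k (ltnSn k).
by apply/set0Pn; exists (s + a); apply/imset2P; exists s a.
Qed.

Lemma mem_sumsets (A : nat -> {set G}) k t : t \in sumsets A k ->
  exists2 u : nat -> G, (forall i, (i < k)%N -> u i \in A i) & t = \sum_(i < k) u i.
Proof.
elim: k t => [|k IH] t /=.
  by rewrite inE => /eqP->; exists (fun=> 0) => //; rewrite big_ord0.
case/imset2P => s a /IH[u uA ->] aA ->.
exists (fun i => if i == k then a else u i).
  by move=> i; rewrite ltnS leq_eqVlt => /orP[/eqP-> | ik]; rewrite ?eqxx // ltn_eqF ?uA.
rewrite big_ord_recr /= eqxx; congr (_ + _).
by apply: eq_bigr => i _; rewrite ltn_eqF.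
Qed.

End Sumsets.

(* Davenport's e-transform: it keeps |A| + |B|, shrinks B and does not
   enlarge the sumset, which drives the induction in Cauchy-Davenport. *)
Section ETransform.
Variables (G : finZmodType) (A B : {set G}) (e b0 : G).
Local Open Scope ring_scope.

Definition etransA : {set G} := A :|: [set e + b - b0 | b in B].
Definition etransB : {set G} := [set b in B | e + b - b0 \in A].

Lemma card_etrans : (#|etransA| + #|etransB| = #|A| + #|B|)%N.
Proof.
have shift_inj : injective (fun b => e + b - b0) by move=> x y /addIr /addrI.
suff -> : #|etransB| = #|A :&: [set e + b - b0 | b in B]|.
  by rewrite cardsUI card_imset.
rewrite -(card_imset etransB shift_inj); apply: eq_card => x; rewrite inE.
apply/imsetP/andP => [[b] | [xA /imsetP[b bB xe]]].
  by rewrite inE => /andP[bB ebA] ->; split; last by apply/imsetP; exists b.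
by exists b; rewrite // inE bB -xe xA.
Qed.

Lemma sumset_etrans : sumset etransA etransB \subset sumset A B.
Proof.
apply/subsetP => _ /imset2P[x b' + b'B' ->]; move: b'B'; rewrite !inE.
case/andP => b'B eb'A /orP[xA | /imsetP[b bB ->]]; apply/imset2P.
  by exists x b'.
by exists (e + b' - b0) b => //; rewrite !(addrAC _ (- b0)) -!(addrA e) (addrC b).
Qed.

End ETransform.

Section CauchyDavenport.
Variable p : nat.
Hypothesis p_pr : prime p.
Local Open Scope ring_scope.

Lemma shift_closed_setT (A : {set 'F_p}) d : d != 0 -> A != set0 ->
  (forall x, x \in A -> x + d \in A) -> A = setT.
Proof.
move=> d0 /set0Pn[a aA] Ad; have Aa k : a + d *+ k \in A.
  by elim: k => [|k IHk]; rewrite ?mulr0n ?addr0 // mulrS addrCA addrC Ad.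
apply/setP => y; rewrite inE.
suff -> : y = a + d *+ ((y - a) / d : 'F_p) by apply: Aa.
by rewrite -mulr_natr natr_Zp mulrC divfK // addrC subrK.
Qed.

Theorem cauchy_davenport (A B : {set 'F_p}) : A != set0 -> B != set0 ->
  (minn p (#|A| + #|B|).-1 <= #|sumset A B|)%N.
Proof.
have [n] := ubnP #|B|; elim: n A B => // n IH A B leBn A0 B0.
have [b0 b0B] := set0Pn _ B0.
have leAsum := leq_card_sumset A b0B.
have [B1 | B2] := leqP #|B| 1.
  have -> : #|B| = 1%N by apply/eqP; rewrite eqn_leq B1 card_gt0.
  by rewrite addn1 (leq_trans (geq_minr _ _)).
case: (boolP [forall a in A, forall b in B, a + b - b0 \in A]) => [stable | ].
  have /set0Pn[b1] : B :\ b0 != set0 by rewrite -card_gt0; rewrite (cardsD1 b0) b0B in B2.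
  rewrite !inE => /andP[b10 b1B].
  have AT : A = setT.
    apply: shift_closed_setT (_ : b1 - b0 != 0) A0 _; first by rewrite subr_eq0.
    move=> x xA; move/forall_inP/(_ x xA)/forall_inP/(_ b1 b1B): stable.
    by rewrite addrA.
  apply: leq_trans (geq_minl _ _) _.
  by rewrite [X in (X <= _)%N](_ : _ = #|A|) // AT cardsT card_Fp.
case/forall_inPn => e eA /forall_inPn[b2 b2B eb2A].
apply: leq_trans (subset_leq_card (sumset_etrans A B e b0)).
rewrite -(card_etrans A B e b0); apply: IH.
- rewrite -ltnS (leq_trans _ leBn) // ltnS proper_card //; apply/properP; split.
    by apply/subsetP => b; rewrite inE => /andP[].
  by exists b2; rewrite // inE b2B (negbTE eb2A).
- by apply/set0Pn; exists e; rewrite inE eA.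
- by apply/set0Pn; exists b0; rewrite inE b0B addrK eA.
Qed.

Lemma card_sumsets (A : nat -> {set 'F_p}) k : (forall i, (i < k)%N -> A i != set0) ->
  (minn p (\sum_(i < k) #|A i| + 1 - k) <= #|sumsets A k|)%N.
Proof.
elim: k => [|k IH] A0 /=; first by rewrite big_ord0 cards1; lia.
have A0' i : (i < k)%N -> A i != set0 by move=> ik; apply: A0; apply: ltnW.
have := cauchy_davenport (sumsets_neq0 A0') (A0 k (ltnSn k)).
have leq_k_sum : (k <= \sum_(i < k) #|A i|)%N.
  by rewrite -[X in (X <= _)%N]card_ord -sum1_card leq_sum // => i _; rewrite card_gt0 A0'.
have := IH A0'; have := A0 k (ltnSn k); rewrite -card_gt0 big_ord_recr /=.
(* [set] identifies occurrences of the same sum or cardinal that differ only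
   in their finType instance; [lia] would treat them as distinct atoms. *)
move: leq_k_sum; set s := \sum_(i < k) _; set c := #|sumsets A k|; rewrite -subn1; lia.
Qed.

Lemma sumsets_pairs_setT (S : nat -> {set 'F_p}) : (4 <= p)%N ->
  (forall i, (i < 8)%N -> S i != set0) ->
  (forall j, (j < 4)%N -> (p./2 < #|S j.*2| + #|S j.*2.+1|)%N) -> sumsets S 8 = setT.
Proof.
move=> p_ge4 S_neq0 S_dense.
have sum_S : (4 * p./2 + 4 <= \sum_(i < 8) #|S i|)%N.
  have : (p./2 < #|S 0| + #|S 1|)%N := S_dense 0 isT.
  have : (p./2 < #|S 2| + #|S 3|)%N := S_dense 1 isT.
  have : (p./2 < #|S 4| + #|S 5|)%N := S_dense 2 isT.
  have : (p./2 < #|S 6| + #|S 7|)%N := S_dense 3 isT.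
  by rewrite !big_ord_recr big_ord0 /=; lia.
have : (p <= (p./2).*2.+1)%N by rewrite -leq_half_double.
have : (2 <= p./2)%N by rewrite geq_half_double.
rewrite -mul2n => half_ge2 le_p_half.
apply/eqP; rewrite eqEcard subsetT cardsT card_Fp //.
apply: leq_trans (card_sumsets S_neq0).
by move: sum_S; set s := \sum_(i < 8) _; lia.
Qed.

End CauchyDavenport.

Lemma sum_card_level (T : finType) (a : T -> nat) K : (forall x, a x <= K) ->
  \sum_(t < K) #|[set x | t < a x]| = \sum_x a x.
Proof.
move=> aK; rewrite (eq_bigr (fun t : 'I_K => \sum_x (t < a x : nat))) => [|t _]; last first.
  by rewrite -sum1dep_card big_mkcond.
rewrite exchange_big; apply: eq_bigr => x _ /=.
by rewrite -big_mkcond (big_ord_narrow (aK x)) sum_nat_const card_ord muln1.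
Qed.

Lemma level_sets (T : finType) (Q : {set T}) (a b : T -> nat) K :
  (forall x, a x <= K) -> (forall x, b x <= K) ->
  (forall x, 0 < a x -> x \in Q) -> (forall x, 0 < b x -> x \in Q) ->
  #|Q| * K < \sum_x a x + \sum_x b x ->
  exists X Y : {set T}, [/\ X != set0, Y != set0, #|Q| < #|X| + #|Y|
    & {in X & Y, forall x y, K < a x + b y}].
Proof.
move=> aK bK aQ bQ ltQab.
pose X (t : 'I_K) := [set x | t < a x].
(* Level t of a is paired with level K - 1 - t of b, forcing a x + b y > K. *)
pose Y (t : 'I_K) := [set y | rev_ord t < b y].
have sumXY : \sum_(t < K) (#|X t| + #|Y t|) = \sum_x a x + \sum_x b x.
  by rewrite big_split /= sum_card_level // -(sum_card_level bK) [in RHS](reindex_inj rev_ord_inj).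
have [t ltQXY] : exists t, #|Q| < #|X t| + #|Y t|.
  apply/existsP; move: ltQab; apply: contraLR; rewrite negb_exists -leqNgt.
  move=> /forallP leXYQ; rewrite -sumXY mulnC -[X in X * _]card_ord -sum_nat_const.
  by apply: leq_sum => s _; rewrite leqNgt leXYQ.
have XQ : X t \subset Q by apply/subsetP => x; rewrite inE => /(leq_ltn_trans (leq0n _)); apply: aQ.
have YQ : Y t \subset Q by apply/subsetP => y; rewrite inE => /(leq_ltn_trans (leq0n _)); apply: bQ.
move: (subset_leq_card XQ) (subset_leq_card YQ) => leXQ leYQ.
exists (X t), (Y t); split => //.
- by rewrite -card_gt0; lia.
- by rewrite -card_gt0; lia.
move=> x y; rewrite !inE /=; have := ltn_ord t; lia.
Qed.

Section QuadraticResidues.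
Variable p : nat.
Hypothesis p_pr : prime p.
Local Open Scope ring_scope.

Definition Qres : {set 'F_p} := [set x | (x != 0) && [exists h, h ^+ 2 == x]].

Lemma Fp_natr_eq0 k : (k%:R == 0 :> 'F_p) = (p %| k)%N.
Proof. by rewrite -(inj_eq val_inj) /= val_Fp_nat. Qed.

Lemma card_Qres : odd p -> (p./2 <= #|Qres|)%N.
Proof.
move=> p_odd; have p_half := odd_double_half p; rewrite p_odd -addnn in p_half.
have ndvd_small k : (0 < k < p)%N -> ~~ (p %| k)%N.
  by case/andP=> k0 kp; rewrite gtnNdvd.
pose sq (i : 'I_p./2) : 'F_p := i.+1%:R ^+ 2.
have sq_inj : injective sq.
  move=> i j /eqP; rewrite eqf_sqr -[X in _ || X]addr_eq0 -natrD Fp_natr_eq0.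
  rewrite (negbTE (ndvd_small _ _)) ?orbF; last by have := ltn_ord i; have := ltn_ord j; lia.
  move=> /eqP/(congr1 val); rewrite /= !val_Fp_nat // !modn_small; last 2 first.
  - by have := ltn_ord j; lia.
  - by have := ltn_ord i; lia.
  by move=> [] /val_inj.
rewrite -[X in (X <= _)%N]card_ord -(card_imset _ sq_inj).
apply/subset_leq_card/subsetP => _ /imsetP[i _ ->]; rewrite inE.
rewrite sqrf_eq0 Fp_natr_eq0 ndvd_small /=; first by apply/existsP; exists i.+1%:R.
by have := ltn_ord i; lia.
Qed.

End QuadraticResidues.

Section CRTLift.
Variables M p : nat.
Hypotheses (M_gt0 : 0 < M) (p_pr : prime p) (coMp : coprime M p).
Local Open Scope ring_scope.

Lemma Fp_val_lt (x : 'F_p) : (x < p)%N.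
Proof. by rewrite -[X in (_ < X)%N](Fp_cast p_pr). Qed.

Lemma coprime_Fp (x : 'F_p) : coprime x p = (x != 0).
Proof. by rewrite coprime_sym prime_coprime // -Fp_natr_eq0 // natr_Zp. Qed.

Lemma val_Fp_sqr (h : 'F_p) : h ^+ 2 = (h ^ 2 %% p)%N :> nat.
Proof. by rewrite -val_Fp_nat // natrX natr_Zp. Qed.

Let Mp_gt0 : (0 < M * p)%N.
Proof. by rewrite muln_gt0 M_gt0 prime_gt0. Qed.

Definition crt (x : 'F_p) (y : 'I_M) : 'I_(M * p) :=
  Ordinal (ltn_pmod (chinese M p y x) Mp_gt0).

Lemma crt_modl x y : (crt x y %% M = y)%N.
Proof. by rewrite /= modn_dvdm ?dvdn_mulr // chinese_modl // modn_small. Qed.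

Lemma crt_modr x y : (crt x y %% p = x)%N.
Proof. by rewrite /= modn_dvdm ?dvdn_mull // chinese_modr // modn_small ?Fp_val_lt. Qed.

Lemma crt_eqE (z : nat) x y :
  ((z %% (M * p))%N == crt x y) = (z %% M == y)%N && (z %% p == x)%N.
Proof.
by rewrite -[X in _ == X](modn_small (ltn_ord (crt x y))) chinese_remainder //
  crt_modl crt_modr.
Qed.

Lemma uncurry_crt_inj : injective (uncurry crt).
Proof.
move=> [x y] [x' y'] /= e; congr pair; apply: val_inj.
  by rewrite /= -(crt_modr x y) -(crt_modr x' y') e.
by rewrite /= -(crt_modl x y) -(crt_modl x' y') e.
Qed.

Lemma crt_surj (z : 'I_(M * p)) : exists x y, z = crt x y.
Proof.
exists (z%:R), (Ordinal (ltn_pmod z M_gt0)); apply/val_inj/eqP.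
by rewrite -[X in X == _](modn_small (ltn_ord z)) crt_eqE val_Fp_nat // !eqxx.
Qed.

Lemma exists_sqr_crt x y :
  [exists h : 'I_(M * p), (h ^ 2 %% (M * p))%N == crt x y]
  = [exists h, h ^+ 2 == x] && [exists h : 'I_M, (h ^ 2 %% M)%N == y].
Proof.
apply/existsP/andP => [[h] | [/existsP[hx /eqP ex] /existsP[hy /eqP ey]]].
  rewrite crt_eqE => /andP[/eqP hM /eqP hp]; split; apply/existsP.
    by exists (h%:R); apply/eqP/ord_inj; rewrite val_Fp_sqr val_Fp_nat // modnXm.
  by exists (Ordinal (ltn_pmod h M_gt0)); rewrite /= modnXm hM.
exists (crt hx hy); rewrite crt_eqE -modnXm crt_modl -(modnXm 2 p) crt_modr.
by rewrite -val_Fp_sqr ey ex !eqxx.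
Qed.

Lemma crt_Zres x y : (crt x y \in Zres (M * p)) = (x \in Qres p) && (y \in Zres M).
Proof.
rewrite !inE coprimeMr -(coprime_modl _ M) crt_modl -(coprime_modl _ p) crt_modr.
by rewrite coprime_Fp exists_sqr_crt -!andbA; bool_congr.
Qed.

Lemma card_Zres_mul : #|Zres (M * p)| = (#|Qres p| * #|Zres M|)%N.
Proof.
rewrite -cardsX -(card_imset _ uncurry_crt_inj); apply: eq_card => z.
have [x [y ->]] := crt_surj z; rewrite crt_Zres.
by rewrite -[crt x y]/(uncurry crt (x, y)) (mem_imset _ _ uncurry_crt_inj) !inE.
Qed.

Lemma sum_crt_eqE (I : finType) (u : I -> 'F_p) (y : I -> 'I_M) n :
  (\sum_i crt (u i) (y i) == n %[mod M * p])%N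
  = (\sum_i y i == n %[mod M])%N && (n%:R == \sum_i u i).
Proof.
rewrite chinese_remainder // -(modn_summ _ _ _ M) -(modn_summ _ _ _ p).
rewrite (eq_bigr _ (fun i _ => crt_modl (u i) (y i))).
rewrite (eq_bigr _ (fun i _ => crt_modr (u i) (y i))).
congr (_ && _); rewrite -(inj_eq val_inj) /= val_Fp_nat //.
have -> : \sum_i u i = (\sum_i (u i : nat))%:R :> 'F_p.
  by rewrite natr_sum; apply: eq_bigr => i _; rewrite natr_Zp.
by rewrite val_Fp_nat // eq_sym.
Qed.

Definition fib (A : {set 'I_(M * p)}) (x : 'F_p) : {set 'I_M} := [set y | crt x y \in A].

Lemma card_fib_sum (A : {set 'I_(M * p)}) : #|A| = (\sum_x #|fib A x|)%N.
Proof.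
under eq_bigr => x _ do rewrite -sum1dep_card.
rewrite pair_big_dep sum1dep_card -(card_imset _ uncurry_crt_inj); apply: eq_card => z.
have [x [y ->]] := crt_surj z.
by rewrite -[crt x y]/(uncurry crt (x, y)) (mem_imset _ _ uncurry_crt_inj) !inE.
Qed.

Lemma fib_Zres (A : {set 'I_(M * p)}) x y : A \subset Zres (M * p) ->
  y \in fib A x -> (x \in Qres p) && (y \in Zres M).
Proof. by move=> /subsetP AZ; rewrite inE -crt_Zres; apply: AZ. Qed.

Lemma fib_sub (A : {set 'I_(M * p)}) x : A \subset Zres (M * p) -> fib A x \subset Zres M.
Proof. by move=> AZ; apply/subsetP => y /(fib_Zres AZ)/andP[]. Qed.

Lemma fib_split (A B : {set 'I_(M * p)}) :
  A \subset Zres (M * p) -> B \subset Zres (M * p) ->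
  (#|Zres (M * p)| < #|A| + #|B|)%N ->
  exists X Y : {set 'F_p}, [/\ X != set0, Y != set0, (#|Qres p| < #|X| + #|Y|)%N
    & {in X & Y, forall x y, #|Zres M| < #|fib A x| + #|fib B y|}]%N.
Proof.
move=> AZ BZ; rewrite card_Zres_mul !card_fib_sum => ltZAB.
have fib_le (C : {set _}) x : C \subset Zres (M * p) -> (#|fib C x| <= #|Zres M|)%N.
  by move=> CZ; apply/subset_leq_card/fib_sub.
have fib_Q (C : {set _}) x : C \subset Zres (M * p) -> (0 < #|fib C x|)%N -> x \in Qres p.
  by move=> CZ; rewrite card_gt0 => /set0Pn[y /(fib_Zres CZ)/andP[]].
by apply: level_sets ltZAB => x; [apply: fib_le | apply: fib_le | apply: fib_Q | apply: fib_Q].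
Qed.

End CRTLift.

(* The induction hypothesis over the primes dividing W; the theorem is the
   case A i = E. *)
Definition dense_pairs_sum8 (M : nat) : Prop :=
  forall A : nat -> {set 'I_M}, (forall i, A i \subset Zres M) ->
  (forall j, j < 4 -> #|Zres M| < #|A j.*2| + #|A j.*2.+1|) ->
  forall n, n %% 24 = 8 -> exists2 x : nat -> 'I_M,
    forall i, i < 8 -> x i \in A i & \sum_(i < 8) x i = n %[mod M].

Lemma dense_pairs_sum8_mul M p : 0 < M -> prime p -> 5 <= p -> coprime M p ->
  dense_pairs_sum8 M -> dense_pairs_sum8 (M * p).
Proof.
move=> M_gt0 p_pr p_ge5 coMp IH A AZ dense n n8.
have p_odd : odd p by case: (even_prime p_pr) p_ge5 => [->|].
have geQp := card_Qres p_pr p_odd.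
have split_pair j : j < 4 -> exists X Y : {set 'F_p}, [/\ X != set0, Y != set0,
    #|Qres p| < #|X| + #|Y| & {in X & Y, forall x y,
    #|Zres M| < #|fib M_gt0 p_pr (A j.*2) x| + #|fib M_gt0 p_pr (A j.*2.+1) y|}].
  by move=> j4; apply: fib_split; rewrite ?AZ ?dense.
have [X0 [Y0 [X0n Y0n XY0 fib0]]] := split_pair 0 isT.
have [X1 [Y1 [X1n Y1n XY1 fib1]]] := split_pair 1 isT.
have [X2 [Y2 [X2n Y2n XY2 fib2]]] := split_pair 2 isT.
have [X3 [Y3 [X3n Y3n XY3 fib3]]] := split_pair 3 isT.
pose S i := nth set0 [:: X0; Y0; X1; Y1; X2; Y2; X3; Y3] i.
have S_full : sumsets S 8 = setT.
  apply: (sumsets_pairs_setT p_pr); first exact: ltnW.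
    by move=> i; do 8?[case: i => [|i] //].
  by case=> [|[|[|[|j]]]] // _; apply: (leq_ltn_trans geQp); assumption.
have /mem_sumsets[u uS sum_u] : (n%:R)%R \in sumsets S 8 by rewrite S_full inE.
pose F i := fib M_gt0 p_pr (A i) (u i).
have dense_F j : j < 4 -> #|Zres M| < #|F j.*2| + #|F j.*2.+1|.
  case: j => [|[|[|[|j]]]] // _.
  - exact: fib0 (uS 0 isT) (uS 1 isT).
  - exact: fib1 (uS 2 isT) (uS 3 isT).
  - exact: fib2 (uS 4 isT) (uS 5 isT).
  - exact: fib3 (uS 6 isT) (uS 7 isT).
have [y yF sum_y] := IH F (fun i => fib_sub _ _ coMp _ (AZ i)) dense_F n n8.
exists (fun i => crt M_gt0 p_pr (u i) (y i)) => [i /yF | ]; first by rewrite inE.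
by apply/eqP; rewrite sum_crt_eqE // sum_y sum_u !eqxx.
Qed.

Lemma dense_pairs_neq0 M (A : nat -> {set 'I_M}) i :
  (forall i, A i \subset Zres M) ->
  (forall j, j < 4 -> #|Zres M| < #|A j.*2| + #|A j.*2.+1|) ->
  i < 8 -> A i != set0.
Proof.
move=> AZ dense i8; rewrite -card_gt0.
have [j [b ei]] : exists j (b : bool), i = b + j.*2.
  by exists i./2, (odd i); rewrite odd_double_half.
have j4 : j < 4 by move: i8; rewrite ei -mul2n; case: (b); lia.
have := dense j j4; have := subset_leq_card (AZ j.*2).
have := subset_leq_card (AZ j.*2.+1).
by rewrite ei; case: (b); rewrite /= ?add1n ?add0n; lia.
Qed.

Lemma sqr_coprime24 (a : nat) : coprime a 24 -> a ^ 2 = 1 %[mod 24].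
Proof.
rewrite -modnXm -coprime_modl; have : a %% 24 < 24 by rewrite ltn_pmod.
by move: (a %% 24) => k; do 24?[case: k => [|k] //].
Qed.

Lemma Zres24 (a : 'I_24) : a \in Zres 24 -> a = 1 :> nat.
Proof.
rewrite inE => /andP[coa /existsP[h /eqP ha]]; move: coa; rewrite -ha.
by rewrite coprime_modl coprime_pexpl // => /sqr_coprime24 ->.
Qed.

Lemma dense_pairs_sum8_24 : dense_pairs_sum8 24.
Proof.
move=> A AZ dense n n8; pose one : 'I_24 := Ordinal (isT : 1 < 24).
exists (fun=> one) => [i i8 | ]; last by rewrite sum_nat_const card_ord n8.
have /set0Pn[a aA] := dense_pairs_neq0 AZ dense i8.
by rewrite (_ : one = a) //; apply/val_inj/esym/Zres24/(subsetP (AZ i)).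
Qed.

Lemma Wmod_S w : 3 <= w -> Wmod w.+1 = if prime w then Wmod w * w else Wmod w.
Proof.
move=> w3; rewrite /Wmod big_mkcond big_nat_recr //= [in RHS]big_mkcond.
by case: (prime w); rewrite ?muln1 // mulnA.
Qed.

Lemma Wmod4 : Wmod 4 = 24.
Proof. by rewrite /Wmod big_mkcond big_nat_recr //= big_geq. Qed.

Lemma Wmod_gt0 w : 0 < Wmod w.
Proof. by rewrite /Wmod muln_gt0 /=; apply: prodn_cond_gt0 => p; apply: prime_gt0. Qed.

Lemma dvdn24_Wmod w : 4 <= w -> 24 %| Wmod w.
Proof.
elim: w => [|w IH] // w4; have [w3 | w4'] := leqP w 3.
  by rewrite (_ : w = 3) ?Wmod4 //; lia.
by rewrite Wmod_S 1?ltnW //; case: (prime w); [apply: dvdn_mulr|]; apply: IH.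
Qed.

Lemma coprime_Wmod w : 4 < w -> prime w -> coprime (Wmod w) w.
Proof.
move=> w5 w_pr; rewrite /Wmod coprimeMl (@coprime_pexpl 3 2) // prime_coprime //.
rewrite dvdn_prime2 // (ltn_eqF (ltn_trans (isT : 2 < 4) w5)) /=.
rewrite big_nat_cond; apply: (big_ind (coprime ^~ w)) => [|x y|q]; first exact: coprime1n.
  by rewrite coprimeMl => -> ->.
by case/andP=> /andP[_ qw] q_pr; rewrite prime_coprime // dvdn_prime2 // ltn_eqF.
Qed.

Lemma dense_pairs_sum8_Wmod w : 4 <= w -> dense_pairs_sum8 (Wmod w).
Proof.
elim: w => [|w IH] // w4; have [w3 | w4'] := leqP w 3.
  by rewrite (_ : w = 3) ?Wmod4; [exact: dense_pairs_sum8_24 | lia].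
rewrite Wmod_S 1?ltnW //; case w_pr: (prime w); last exact: IH.
have w5 : 4 < w by rewrite ltn_neqAle w4' andbT; apply: contraTneq w_pr => <-.
by apply: dense_pairs_sum8_mul (IH w4') => //; [apply: Wmod_gt0 | apply: coprime_Wmod].
Qed.

Lemma int_nat_repr (n : int) (W : nat) : 0 < W ->
  exists m : nat, forall d, d %| W -> (m = n %[mod d])%Z.
Proof.
move=> W_gt0; exists `|(n %% W)%Z|%N => d /dvdnP[k eW].
rewrite gez0_abs ?modz_ge0 -?lt0n // [in RHS](divz_eq n W) eW PoszM mulrA.
by rewrite modzMDl.
Qed.

Theorem lemma3p4 (w : nat) (E : {set 'I_(Wmod w)}) :
  4 <= w ->
  E \subset Zres (Wmod w) ->
  2 * #|E| > #|Zres (Wmod w)| ->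
  forall n : int, (n = 8 %[mod 24])%Z ->
  exists b : 'I_8 -> 'I_(Wmod w),
    (forall i, b i \in E) /\
    (n = (\sum_(i < 8) (b i : nat))%:Z %[mod (Wmod w)%:Z])%Z.
Proof.
move=> w4 EZ E_dense n n8.
have [m m_n] := int_nat_repr n (Wmod_gt0 w).
have m8 : m %% 24 = 8.
  by apply/eqP; rewrite -eqz_nat -modz_nat m_n ?dvdn24_Wmod // n8.
have dense j : j < 4 -> #|Zres (Wmod w)| < #|E| + #|E| by rewrite addnn -mul2n.
have [x xE sum_x] := dense_pairs_sum8_Wmod w4 (fun=> EZ) dense m8.
exists (fun i => x i); split => [i | ]; first exact: xE.
by rewrite -m_n // !modz_nat sum_x.
Qed.
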